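(* In the $N$-customer elementary Indian Buffet Game, assume homogeneity: $u_i(q,n)=u(q,n)$ for all customers $i$, all $q\in Q$ and all $n$, where $u(q,n)$ is non-increasing in $n$ for each $q$. Let $d^*=(d_1^*,\dots,d_N^* )$ be the equilibrium path generated by the strategies $\sigma$, i.e. $n_1=0$, $d_i^*=\sigma_i(n_i)$, $n_{i+1}=n_i+d_i^*$, and let $n^*=\sum_{k=1}^N d_k^*$. Then $d_i^*=1$ if and only if $1\le i\le n^*$.
   Context: Elementary Indian Buffet Game: a single dish whose unknown state $\theta$ lies in a finite set $\Theta$; the quality $q$ lies in a finite set $Q$ with probability mass function $f(q\mid\theta)$ given $\theta$; common belief $p=\{p(\theta)\}_{\theta\in\Theta}$. Customers $1,\dots,N$ decide sequentially whether to request the dish; customer $i$ observes $n_i=\sum_{k<i}d_k$. With utility $u_i(q,n)$ define $\bar U_i(n)=\sum_{\theta\in\Theta}\sum_{q\in Q}u_i(q,n)f(q\mid\theta)p(\theta)$. Recursive procedure $A(n,i)$ returning $(d,m)$: if $i=N$, return $d=1$ if $\bar U_N(n+1)>0$ and $d=0$ otherwise, with $m=0$. If $i<N$: let $(d',m')=A(n+1,i+1)$ and $m=m'+d'$; if $\bar U_i(n+m+1)>0$ return $(1,m)$; otherwise let $(d'',m'')=A(n,i+1)$ and return $(0,m''+d'')$. Define $\sigma_i(n)$ as the first component of $A(n,i)$. *)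

From HB Require Import structures.
From mathcomp Require Import all_boot all_order all_algebra.
Set Implicit Arguments. Unset Strict Implicit. Unset Printing Implicit Defensive.
Import Order.TTheory GRing.Theory Num.Theory.
Local Open Scope ring_scope.

(* Expected utility of customer i when the total number of requesters is n:
   Ubar_i(n) = sum_theta sum_q u_i(q,n) f(q|theta) p(theta).
   u i q n : utility of customer i (customers numbered 1..N),
   f q th  : f(q | theta),  p th : p(theta). *)
Definition Ubar (R : realFieldType) (Theta Q : finType)
  (u : nat -> Q -> nat -> R) (f : Q -> Theta -> R) (p : Theta -> R)
  (i n : nat) : R :=
  \sum_(th : Theta) \sum_(q : Q) u i q n * f q th * p th.

(* The recursive procedure A(n,i); k is the fuel N - i.
   Returns (d, m) with d a boolean decision (true = request). *)
Fixpoint Aaux (R : realFieldType) (Ub : nat -> nat -> R) (k n i : nat)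
  : bool * nat :=
  match k with
  | 0 => (0 < Ub i n.+1, 0%N)
  | k'.+1 =>
      let: (d', m') := Aaux Ub k' n.+1 i.+1 in
      let m := (m' + d')%N in
      if 0 < Ub i (n + m).+1 then (true, m)
      else let: (d'', m'') := Aaux Ub k' n i.+1 in (false, (m'' + d'')%N)
  end.

Definition A (R : realFieldType) (Ub : nat -> nat -> R) (N n i : nat)
  : bool * nat := Aaux Ub (N - i) n i.

Definition sigma (R : realFieldType) (Ub : nat -> nat -> R) (N i n : nat)
  : nat := nat_of_bool (A Ub N n i).1.

(* nbefore i = number of requests among customers 1..i on the equilibrium
   path; so n_i = nbefore (i-1), and n_1 = nbefore 0 = 0. *)
Fixpoint nbefore (R : realFieldType) (Ub : nat -> nat -> R) (N i : nat)
  : nat :=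
  match i with
  | 0 => 0%N
  | i'.+1 => (nbefore Ub N i' + sigma Ub N i (nbefore Ub N i'))%N
  end.

Definition dstar (R : realFieldType) (Ub : nat -> nat -> R) (N i : nat)
  : nat := sigma Ub N i (nbefore Ub N i.-1).

From HB Require Import structures.
From mathcomp Require Import all_boot all_order all_algebra.
Import Order.TTheory GRing.Theory Num.Theory.
Local Open Scope ring_scope.

(* Under homogeneity and monotonicity, every customer's expected utility is
   the same non-increasing function of the number of requesters, so the set
   P of group sizes n with positive expected utility is downward closed.
   The proof has three parts.
   1. For any downward-closed P whose membership decides the sign of the
      utilities, the recursive procedure A(n,i) is computed in closed form:
      A(n,i) = (P (n+1), number of k in [n+2, n+1+N-i] with P k); in
      particular sigma_i(n) = P (n+1), independently of i.
   2. The equilibrium path n_1 = 0, n_{i+1} = n_i + P (n_i + 1) either keeps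
      pace with the index (n_i = i - 1) or is stuck forever; hence customer
      i requests iff i <= n* = n_{N+1}.
   3. Expected utilities of a homogeneous, monotone utility are
      non-increasing, which supplies the hypothesis of part 1. *)

Section ThresholdRule.

Variable P : nat -> bool.
Hypothesis P_down : forall {m n}, (m <= n)%N -> P n -> P m.

Lemma count_iota_outside (k b : nat) : ~~ P b -> count P (iota b k) = 0%N.
Proof.
move=> Pb; apply/eqP; rewrite -leqn0 leqNgt -has_count; apply/hasP => -[x].
rewrite mem_iota => /andP[bx _] Px; by rewrite (P_down bx Px) in Pb.
Qed.

(* Moving forward by the number of successes after a does not change the
   truth value of P: the successes after a form an initial segment. *)
Lemma P_shift_count (k a : nat) : P (a + count P (iota a.+1 k)) = P a.
Proof.
elim: k a => [|k IH] a /=; first by rewrite addn0.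
have [Pa1|nPa1] := boolP (P a.+1).
  by rewrite add1n addnS -addSn IH Pa1 (P_down (leqnSn a) Pa1).
have nPa2 : ~~ P a.+2.
  by apply/negP => Pa2; rewrite (P_down (leqnSn a.+1) Pa2) in nPa1.
by rewrite count_iota_outside //= !addn0.
Qed.

Lemma Aaux_closed {R : realFieldType} {Ub : nat -> nat -> R} :
  (forall i n, (0 < Ub i n) = P n) ->
  forall k n i, Aaux Ub k n i = (P n.+1, count P (iota n.+2 k)).
Proof.
move=> UbP; elim=> [|k IH] n i /=; first by rewrite UbP.
rewrite IH UbP [(count _ _ + _)%N]addnC.
have -> : (n + (P n.+2 + count P (iota n.+3 k))).+1
          = (n.+1 + count P (iota n.+2 k.+1))%N by rewrite /= addSn.
rewrite P_shift_count; case: ifP => // nPn1.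
have nP : forall m, (n.+1 <= m)%N -> ~~ P m.
  by move=> m le_m; apply/negP => /(P_down le_m); rewrite nPn1.
by rewrite IH nPn1 (negbTE (nP _ (leqnSn _))) !count_iota_outside ?nP // ltnW.
Qed.

Lemma sigma_closed {R : realFieldType} {Ub : nat -> nat -> R} :
  (forall i n, (0 < Ub i n) = P n) -> forall N i n, sigma Ub N i n = P n.+1.
Proof. by move=> UbP N i n; rewrite /sigma /A (Aaux_closed UbP). Qed.

End ThresholdRule.

Section RequestPath.

Variable P : nat -> bool.
Variable s : nat -> nat.
Hypothesis s0 : s 0 = 0%N.
Hypothesis sS : forall j, s j.+1 = (s j + P (s j).+1)%N.

Lemma path_mono {a b : nat} : (a <= b)%N -> (s a <= s b)%N.
Proof.
move=> /subnK <-; elim: (b - a)%N => [|c IH] //.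
by rewrite addSn sS (leq_trans IH) // leq_addr.
Qed.

Lemma path_stuck {a b : nat} : (a <= b)%N -> ~~ P (s a).+1 -> s b = s a.
Proof.
move=> /subnK <- nP; elim: (b - a)%N => [|c IH] //.
by rewrite addSn sS IH (negbTE nP) addn0.
Qed.

Lemma path_diag_or_stuck (j : nat) : s j = j \/ ~~ P (s j).+1.
Proof.
elim: j => [|j [Ej|nP]]; first by left.
- rewrite sS Ej; case Pj: (P j.+1); first by left; rewrite addn1.
  by right; rewrite /= addn0 Pj.
- by right; rewrite sS (negbTE nP) addn0.
Qed.

Lemma path_le_index (j : nat) : (s j <= j)%N.
Proof.
elim: j => [|j IH]; first by rewrite s0.
by rewrite sS; case: (P _); rewrite ?addn1 ?addn0 // (leq_trans IH).
Qed.

Lemma path_request_iff {i N : nat} : (i < N)%N -> P (s i).+1 = (i < s N)%N.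
Proof.
move=> iN; apply/idP/idP => [Pi | lt_iN].
  have [Ei|] := path_diag_or_stuck i; last by rewrite Pi.
  by apply: (leq_trans _ (path_mono iN)); rewrite sS Pi Ei addn1.
apply/negPn/negP => nPi.
by move: lt_iN; rewrite (path_stuck (ltnW iN) nPi) ltnNge path_le_index.
Qed.

End RequestPath.

Lemma Ubar_homogeneous {R : realFieldType} {Theta Q : finType}
  {u : nat -> Q -> nat -> R} {uh : Q -> nat -> R} (f : Q -> Theta -> R)
  (p : Theta -> R) (i n : nat) :
  (forall i q n, u i q n = uh q n) ->
  Ubar u f p i n = Ubar (fun=> uh) f p 0 n.
Proof. by move=> hu; apply: eq_bigr => th _; apply: eq_bigr => q _; rewrite hu. Qed.

(* Averaging with nonnegative weights preserves monotonicity in n. *)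
Lemma Ubar_nonincreasing (R : realFieldType) (Theta Q : finType)
  (uh : Q -> nat -> R) (f : Q -> Theta -> R) (p : Theta -> R) (n m : nat) :
  (forall q th, 0 <= f q th) -> (forall th, 0 <= p th) ->
  (forall q n m, (n <= m)%N -> uh q m <= uh q n) ->
  (n <= m)%N -> Ubar (fun=> uh) f p 0 m <= Ubar (fun=> uh) f p 0 n.
Proof.
move=> f_ge0 p_ge0 uh_mono le_nm.
apply: ler_sum => th _; apply: ler_sum => q _.
by rewrite ler_wpM2r // ler_wpM2r // uh_mono.
Qed.

Theorem lemma1 (R : realFieldType) (Theta Q : finType)
  (f : Q -> Theta -> R) (p : Theta -> R)
  (u : nat -> Q -> nat -> R) (uh : Q -> nat -> R) (N : nat) :
  (forall q th, 0 <= f q th) ->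
  (forall th, \sum_(q : Q) f q th = 1) ->
  (forall th, 0 <= p th) ->
  \sum_(th : Theta) p th = 1 ->
  (forall i q n, u i q n = uh q n) ->
  (forall q n m, (n <= m)%N -> uh q m <= uh q n) ->
  let Ub := Ubar u f p in
  let nstar := nbefore Ub N N in
  forall i : nat, (1 <= i <= N)%N ->
    (dstar Ub N i = 1%N <-> (i <= nstar)%N).
Proof.
move=> f_ge0 _ p_ge0 _ hu uh_mono Ub nstar.
pose P n := 0 < Ubar (fun=> uh) f p 0 n.
have UbP i n : (0 < Ub i n) = P n by rewrite /Ub (Ubar_homogeneous f p i n hu).
have P_down m n : (m <= n)%N -> P n -> P m.
  by move=> le_mn Pn; apply: (lt_le_trans Pn); apply: Ubar_nonincreasing.
have sigmaP := sigma_closed _ P_down UbP N.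
have sS j : nbefore Ub N j.+1 = (nbefore Ub N j + P (nbefore Ub N j).+1)%N.
  by rewrite /= sigmaP.
case=> [|i] // /andP[_ iN].
rewrite /dstar /nstar sigmaP -(path_request_iff _ _ (erefl 0%N) sS iN).
by case: (P _).
Qed.
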